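(* Let $b>0$ and $c>0$ be constants, let $J\subset\mathbb{R}$ be an open interval, and let $a\in L^\infty(J)$ satisfy $0\le a(t)\le C$ for almost every $t\in J$, where $C\ge 0$ is a constant such that $$C< c\,\max\{c,\,2\sqrt b\}.$$ Then there exist constants $\delta>0$ and $M>0$ such that every solution $u\in W^{2,\infty}_{\mathrm{loc}}(J)$ of $$u''(t)+c\,u'(t)+\big(b+a(t)\big)u(t)=0\quad\text{for a.e. } t\in J$$ satisfies $$u(t)^2+u'(t)^2\le M\,\big[u(s)^2+u'(s)^2\big]\,e^{-\delta (t-s)}$$ for all $s,t\in J$ with $s\le t$. *)

From Stdlib Require Import Reals Lra.
Open Scope R_scope.

(* Open interval (lo, hi) with possibly infinite endpoints: None = -oo / +oo. *)
Definition in_open_interval (lo hi : option R) (x : R) : Prop :=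
  (match lo with None => True | Some l => l < x end) /\
  (match hi with None => True | Some h => x < h end).

Definition null_set (N : R -> Prop) : Prop :=
  forall eps : R, 0 < eps ->
  exists l r : nat -> R,
    (forall n, l n <= r n) /\
    (forall x, N x -> exists n, l n < x < r n) /\
    (forall n, sum_f_R0 (fun k => r k - l k) n <= eps).

Definition ae_on (J : R -> Prop) (P : R -> Prop) : Prop :=
  exists N, null_set N /\ forall t, J t -> ~ N t -> P t.

Definition loc_lipschitz_on (J : R -> Prop) (f : R -> R) : Prop :=
  forall x y, J x -> J y -> exists L : R,
    forall s t, x <= s <= y -> x <= t <= y -> Rabs (f s - f t) <= L * Rabs (s - t).

(* u is a W^{2,oo}_loc(J) solution of u'' + c u' + (b + a) u = 0 a.e. on J:
   u is differentiable on J with derivative u1 (= u'), u1 is locally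
   Lipschitz on J (i.e. u'' in L^oo_loc), and at almost every t in J,
   u1 is differentiable with u''(t) = - c u'(t) - (b + a t) u(t). *)
Definition is_W2inf_loc_solution (J : R -> Prop) (b c : R) (a u u1 : R -> R) : Prop :=
  (forall t, J t -> derivable_pt_lim u t (u1 t)) /\
  loc_lipschitz_on J u1 /\
  ae_on J (fun t => derivable_pt_lim u1 t (- (c * u1 t) - (b + a t) * u t)).

From Stdlib Require Import Reals Lra Lia Classical.
Open Scope R_scope.

(* V(u, u') = alpha u^2 + c u u' + u'^2 with alpha = c^2/2 + b + m is a strict Lyapunov
   function: along a solution, dV/dt = -[c (b + a) u^2 + 2 (a - m) u u' + c u'^2].
   The determinant c^2 (b + a) - (a - m)^2 of this form is concave in a, so it is
   positive on [0, C] once it is positive at a = 0 and a = C; the hypothesis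
   C < c max(c, 2 sqrt b) makes this possible with m = 0 (if C < c^2) or m = C/2.
   Then dV/dt <= -delta V, so V e^(delta t) is nonincreasing, and V is comparable to
   u^2 + u'^2.  As u' is merely Lipschitz, monotonicity comes from the fact that a
   Lipschitz function with a.e. nonpositive derivative is nonincreasing, proved
   from the covering definition of null sets. *)

Lemma sum_f_R0_le_mono (An : nat -> R) (n m : nat) :
  (forall k, 0 <= An k) -> (n <= m)%nat -> sum_f_R0 An n <= sum_f_R0 An m.
Proof.
  intros Hpos Hnm; induction Hnm as [|m _ IH]; [lra|].
  rewrite tech5; specialize (Hpos (S m)); lra.
Qed.

Lemma sum_f_R0_ge_term (An : nat -> R) (n K : nat) :
  (forall k, 0 <= An k) -> (n <= K)%nat -> An n <= sum_f_R0 An K.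
Proof.
  intros Hpos HnK; apply Rle_trans with (sum_f_R0 An n); [|now apply sum_f_R0_le_mono].
  destruct n as [|n]; simpl; [lra|].
  pose proof (cond_pos_sum An n Hpos); lra.
Qed.

Lemma sum_f_R0_interleave (F f g : nat -> R) (k : nat) :
  (forall j, F (2 * j)%nat = f j) -> (forall j, F (S (2 * j)) = g j) ->
  sum_f_R0 F (S (2 * k)) = sum_f_R0 f k + sum_f_R0 g k.
Proof.
  intros Hf Hg; induction k as [|k IH].
  - simpl; rewrite <- (Hf 0%nat), <- (Hg 0%nat); reflexivity.
  - replace (S (2 * S k)) with (S (S (S (2 * k)))) by lia.
    rewrite (tech5 F (S (S (2 * k)))), (tech5 F (S (2 * k))), IH, !tech5.
    replace (S (S (2 * k))) with (2 * S k)%nat by lia.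
    rewrite Hf, Hg; ring.
Qed.

Lemma null_set_union (N1 N2 : R -> Prop) :
  null_set N1 -> null_set N2 -> null_set (fun x => N1 x \/ N2 x).
Proof.
  intros H1 H2 eps Heps.
  destruct (H1 (eps / 2)) as (l1 & r1 & Hlr1 & Hcov1 & Hsum1); [lra|].
  destruct (H2 (eps / 2)) as (l2 & r2 & Hlr2 & Hcov2 & Hsum2); [lra|].
  set (mix := fun (f g : nat -> R) n => if Nat.even n then f (Nat.div2 n) else g (Nat.div2 n)).
  assert (Hmix_even : forall f g k, mix f g (2 * k)%nat = f k).
  { intros f g k; unfold mix; now rewrite Nat.even_mul, Nat.div2_double. }
  assert (Hmix_odd : forall f g k, mix f g (S (2 * k)) = g k).
  { intros f g k; unfold mix; now rewrite Nat.even_succ, Nat.odd_mul, Nat.div2_succ_double. }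
  exists (mix l1 l2), (mix r1 r2); split; [|split].
  - intros n; unfold mix; destruct (Nat.even n); auto.
  - intros x [Hx | Hx].
    + destruct (Hcov1 x Hx) as [n Hn]; exists (2 * n)%nat; now rewrite !Hmix_even.
    + destruct (Hcov2 x Hx) as [n Hn]; exists (S (2 * n)); now rewrite !Hmix_odd.
  - intros n.
    assert (Hpos : forall k, 0 <= mix r1 r2 k - mix l1 l2 k).
    { intros k; unfold mix; destruct (Nat.even k);
        [specialize (Hlr1 (Nat.div2 k)) | specialize (Hlr2 (Nat.div2 k))]; lra. }
    apply Rle_trans with (sum_f_R0 (fun k => mix r1 r2 k - mix l1 l2 k) (S (2 * n))).
    { apply sum_f_R0_le_mono; [exact Hpos | lia]. }
    rewrite (sum_f_R0_interleave _ (fun j => r1 j - l1 j) (fun j => r2 j - l2 j));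
      [| intros j; now rewrite !Hmix_even | intros j; now rewrite !Hmix_odd].
    specialize (Hsum1 n); specialize (Hsum2 n); lra.
Qed.

Definition len_upto (l r x : R) : R := Rmax 0 (Rmin x r - l).

Lemma len_upto_nonneg l r x : 0 <= len_upto l r x.
Proof. unfold len_upto, Rmax, Rmin; repeat destruct Rle_dec; lra. Qed.

Lemma len_upto_le l r x : l <= r -> len_upto l r x <= r - l.
Proof. intros; unfold len_upto, Rmax, Rmin; repeat destruct Rle_dec; lra. Qed.

Lemma len_upto_mono l r x y : x <= y -> len_upto l r x <= len_upto l r y.
Proof. intros; unfold len_upto, Rmax, Rmin; repeat destruct Rle_dec; lra. Qed.

Lemma len_upto_inside l r x y :
  l <= x -> x <= y -> y <= r -> len_upto l r y - len_upto l r x = y - x.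
Proof. intros; unfold len_upto, Rmax, Rmin; repeat destruct Rle_dec; lra. Qed.

Lemma pointwise_sup (F : nat -> R -> R) (B : R) :
  (forall K x, F K x <= B) ->
  exists G : R -> R, (forall K x, F K x <= G x) /\
    (forall x B', (forall K, F K x <= B') -> G x <= B').
Proof.
  intros HB.
  assert (Hbound : forall x, bound (fun z => exists K, z = F K x))
    by (intros x; exists B; intros z [K ->]; apply HB).
  assert (Hne : forall x, exists z, exists K, z = F K x)
    by (intros x; exists (F 0%nat x), 0%nat; reflexivity).
  exists (fun x => proj1_sig (completeness _ (Hbound x) (Hne x))); split;
    [intros K x | intros x B' HB']; destruct completeness as [g [Hub Hlub]]; simpl.
  - apply Hub; eauto.
  - apply Hlub; intros z [K ->]; apply HB'.
Qed.

(* G is the total length of the covering intervals lying to the left of x: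
   it has total variation at most eps but grows at unit rate across every
   covering interval, hence to the right of every point of N. *)
Lemma null_set_gauge (N : R -> Prop) (eps : R) :
  null_set N -> 0 < eps ->
  exists G : R -> R, (forall x y, x <= y -> G x <= G y) /\
    (forall x, 0 <= G x <= eps) /\
    (forall x, N x -> exists r, x < r /\ forall y, x <= y <= r -> y - x <= G y - G x).
Proof.
  intros HN Heps; destruct (HN eps Heps) as (l & r & Hlr & Hcov & Hsum).
  set (F := fun K x => sum_f_R0 (fun k => len_upto (l k) (r k) x) K).
  assert (F_mono : forall K x y, x <= y -> F K x <= F K y)
    by (intros; apply sum_Rle; intros; now apply len_upto_mono).
  assert (F_incr : forall K K' x, (K <= K')%nat -> F K x <= F K' x)
    by (intros; apply sum_f_R0_le_mono; auto using len_upto_nonneg).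
  assert (F_bound : forall K x, F K x <= eps).
  { intros K x; apply Rle_trans with (sum_f_R0 (fun k => r k - l k) K); [|apply Hsum].
    apply sum_Rle; intros; now apply len_upto_le. }
  assert (F_grow : forall n K x y, (n <= K)%nat -> l n <= x -> x <= y -> y <= r n ->
    y - x <= F K y - F K x).
  { intros n K x y HnK Hl Hxy Hr; unfold F; rewrite <- minus_sum.
    rewrite <- (len_upto_inside (l n) (r n) x y) by assumption.
    apply (sum_f_R0_ge_term (fun k => len_upto (l k) (r k) y - len_upto (l k) (r k) x));
      [intros k; pose proof (len_upto_mono (l k) (r k) x y Hxy); lra | exact HnK]. }
  destruct (pointwise_sup F eps F_bound) as (G & HG & HGlub).
  exists G; split; [|split].
  - intros x y Hxy; apply HGlub; intros K.
    apply Rle_trans with (F K y); [now apply F_mono | apply HG].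
  - intros x; split; [|now apply HGlub].
    apply Rle_trans with (F 0%nat x); [apply len_upto_nonneg | apply HG].
  - intros x Hx; destruct (Hcov x Hx) as [n Hn]; exists (r n); split; [lra|].
    intros y Hy; enough (G x <= G y - (y - x)) by lra.
    apply HGlub; intros K.
    pose proof (F_incr K (Nat.max K n) x (Nat.le_max_l K n)).
    pose proof (F_grow n (Nat.max K n) x y (Nat.le_max_r K n) ltac:(lra) ltac:(lra) ltac:(lra)).
    pose proof (HG (Nat.max K n) y); lra.
Qed.

Definition lipschitz_on (s t : R) (f : R -> R) : Prop :=
  exists L, 0 <= L /\
    forall x y, s <= x <= t -> s <= y <= t -> Rabs (f x - f y) <= L * Rabs (x - y).

Lemma lipschitz_on_bounded s t f :
  s <= t -> lipschitz_on s t f -> exists B, forall x, s <= x <= t -> Rabs (f x) <= B.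
Proof.
  intros Hst [L [HL Hf]]; exists (Rabs (f s) + L * (t - s)); intros x Hx.
  specialize (Hf x s Hx ltac:(lra)); rewrite (Rabs_right (x - s)) in Hf by lra.
  pose proof (Rabs_triang (f x - f s) (f s)) as Htri.
  replace (f x - f s + f s) with (f x) in Htri by ring.
  assert (L * (x - s) <= L * (t - s)) by (apply Rmult_le_compat_l; lra); lra.
Qed.

Lemma lipschitz_on_const s t k : lipschitz_on s t (fun _ => k).
Proof.
  exists 0; split; [lra|]; intros.
  replace (k - k) with 0 by ring; rewrite Rabs_R0; lra.
Qed.

Lemma lipschitz_on_plus s t f g :
  lipschitz_on s t f -> lipschitz_on s t g -> lipschitz_on s t (fun x => f x + g x).
Proof.
  intros [L1 [HL1 H1]] [L2 [HL2 H2]]; exists (L1 + L2); split; [lra|]; intros x y Hx Hy.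
  specialize (H1 x y Hx Hy); specialize (H2 x y Hx Hy).
  replace (f x + g x - (f y + g y)) with ((f x - f y) + (g x - g y)) by ring.
  pose proof (Rabs_triang (f x - f y) (g x - g y)); lra.
Qed.

Lemma lipschitz_on_mult s t f g :
  s <= t -> lipschitz_on s t f -> lipschitz_on s t g -> lipschitz_on s t (fun x => f x * g x).
Proof.
  intros Hst Hf Hg.
  destruct (lipschitz_on_bounded s t f Hst Hf) as [Bf HBf].
  destruct (lipschitz_on_bounded s t g Hst Hg) as [Bg HBg].
  destruct Hf as [L1 [HL1 H1]], Hg as [L2 [HL2 H2]].
  assert (0 <= Bf) by (pose proof (HBf s ltac:(lra)); pose proof (Rabs_pos (f s)); lra).
  assert (0 <= Bg) by (pose proof (HBg s ltac:(lra)); pose proof (Rabs_pos (g s)); lra).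
  exists (Bf * L2 + Bg * L1); split; [nra|]; intros x y Hx Hy.
  replace (f x * g x - f y * g y) with (f x * (g x - g y) + g y * (f x - f y)) by ring.
  pose proof (Rabs_triang (f x * (g x - g y)) (g y * (f x - f y))) as Htri.
  rewrite !Rabs_mult in Htri.
  assert (Rabs (f x) * Rabs (g x - g y) <= Bf * (L2 * Rabs (x - y)))
    by (apply Rmult_le_compat; auto using Rabs_pos).
  assert (Rabs (g y) * Rabs (f x - f y) <= Bg * (L1 * Rabs (x - y)))
    by (apply Rmult_le_compat; auto using Rabs_pos).
  lra.
Qed.

Lemma lipschitz_on_derivable s t f f' :
  s <= t -> (forall x, s <= x <= t -> derivable_pt_lim f x (f' x)) ->
  (exists B, forall x, s <= x <= t -> Rabs (f' x) <= B) -> lipschitz_on s t f.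
Proof.
  intros Hst Hd [B HB].
  assert (0 <= B) by (pose proof (HB s ltac:(lra)); pose proof (Rabs_pos (f' s)); lra).
  assert (Hlt : forall x y, s <= x -> x < y -> y <= t -> Rabs (f x - f y) <= B * Rabs (x - y)).
  { intros x y Hx Hxy Hy.
    destruct (MVT_cor2 f f' x y Hxy) as [z [Hz Hzxy]]; [intros z Hz; apply Hd; lra|].
    rewrite Rabs_minus_sym, Hz, (Rabs_minus_sym x y), Rabs_mult.
    apply Rmult_le_compat_r; [apply Rabs_pos | apply HB; lra]. }
  exists B; split; [assumption|]; intros x y Hx Hy.
  destruct (Rtotal_order x y) as [Hxy | [-> | Hxy]].
  - apply Hlt; lra.
  - unfold Rminus; rewrite !Rplus_opp_r, Rabs_R0; lra.
  - rewrite Rabs_minus_sym, (Rabs_minus_sym x y); apply Hlt; lra.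
Qed.

Lemma loc_lipschitz_on_lipschitz_on (J : R -> Prop) f s t :
  loc_lipschitz_on J f -> J s -> J t -> lipschitz_on s t f.
Proof.
  intros Hf Js Jt; destruct (Hf s t Js Jt) as [L HL].
  exists (Rabs L); split; [apply Rabs_pos|]; intros x y Hx Hy.
  eapply Rle_trans; [now apply HL|].
  apply Rmult_le_compat_r; [apply Rabs_pos | apply Rle_abs].
Qed.

Lemma derivable_pt_lim_right_upper f x d eps :
  derivable_pt_lim f x d -> 0 < eps ->
  exists rho, 0 < rho /\ forall y, x <= y <= x + rho -> f y - f x <= (d + eps) * (y - x).
Proof.
  intros Hd Heps; destruct (Hd eps Heps) as [[del Hdel] Hlim]; simpl in Hlim.
  exists (del / 2); split; [lra|]; intros y Hy.
  destruct (Req_dec y x) as [-> | Hyx]; [replace (x - x) with 0 by ring; lra|].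
  specialize (Hlim (y - x) ltac:(lra) ltac:(rewrite Rabs_right; lra)).
  replace (x + (y - x)) with y in Hlim by ring.
  pose proof (Rle_abs ((f y - f x) / (y - x) - d)) as Habs.
  assert (Hq : (f y - f x) / (y - x) < d + eps) by lra.
  apply Rmult_lt_compat_r with (r := y - x) in Hq; [|lra].
  replace ((f y - f x) / (y - x) * (y - x)) with (f y - f x) in Hq by (field; lra); lra.
Qed.

Lemma left_lipschitz_le (h : R -> R) (s z L B : R) :
  s < z -> (forall y, s <= y < z -> h y <= B) ->
  (forall y, s <= y < z -> h z <= h y + L * (z - y)) -> h z <= B.
Proof.
  intros Hsz HB Hleft; apply Rle_plus_epsilon; intros e He.
  pose proof (Rabs_pos L).
  set (eta := Rmin (z - s) (e / (Rabs L + 1))).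
  assert (Heta : 0 < eta) by (apply Rmin_pos; [lra | apply Rdiv_lt_0_compat; lra]).
  assert (eta <= z - s) by apply Rmin_l.
  assert ((Rabs L + 1) * eta <= e).
  { apply Rle_trans with ((Rabs L + 1) * (e / (Rabs L + 1))).
    - apply Rmult_le_compat_l; [lra | apply Rmin_r].
    - right; field; lra. }
  assert (L * eta <= Rabs L * eta) by (apply Rmult_le_compat_r; [lra | apply Rle_abs]).
  pose proof (HB (z - eta) ltac:(lra)); pose proof (Hleft (z - eta) ltac:(lra)).
  replace (z - (z - eta)) with eta in * by ring; lra.
Qed.

(* The supremum of the initial segments of [s, t] on which h <= h s is t. *)
Lemma right_induction_le (h : R -> R) (s t L : R) :
  s <= t ->
  (forall y z, s <= y -> y <= z -> z <= t -> h z <= h y + L * (z - y)) ->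
  (forall x, s <= x < t -> exists rho, 0 < rho /\
     forall y, x <= y <= x + rho -> y <= t -> h y <= h x) ->
  h t <= h s.
Proof.
  intros Hst Hleft Hloc.
  set (A := fun x => s <= x <= t /\ forall y, s <= y <= x -> h y <= h s).
  assert (HsA : A s) by (split; [lra|]; intros y Hy; replace y with s by lra; lra).
  destruct (completeness A) as [x0 [Hub Hlub]];
    [exists t; intros x [Hx _]; lra | now exists s |].
  assert (Hsx0 : s <= x0) by now apply Hub.
  assert (Hx0t : x0 <= t) by (apply Hlub; intros x [Hx _]; lra).
  assert (Hbelow : forall y, s <= y < x0 -> h y <= h s).
  { intros y Hy; destruct (classic (exists x, A x /\ y < x)) as [[x [[_ Hx] Hyx]] | Hno].
    - apply Hx; lra.
    - enough (x0 <= y) by lra.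
      apply Hlub; intros x Hx; apply Rnot_lt_le; intro; apply Hno; eauto. }
  assert (Hx0 : h x0 <= h s).
  { destruct (Req_dec x0 s) as [-> | Hne]; [lra|].
    apply (left_lipschitz_le h s x0 L); [lra | exact Hbelow |].
    intros y Hy; apply Hleft; lra. }
  destruct (Req_dec x0 t) as [<- | Hx0t']; [exact Hx0|].
  destruct (Hloc x0 ltac:(lra)) as [rho [Hrho Hr]].
  set (z := Rmin t (x0 + rho)).
  assert (Hz : x0 < z <= t /\ z <= x0 + rho) by (unfold z, Rmin; destruct Rle_dec; lra).
  assert (Az : A z).
  { split; [lra|]; intros y Hy.
    destruct (Rle_or_lt y x0) as [Hyx0 | Hyx0].
    - destruct (Req_dec y x0) as [-> | ]; [exact Hx0 | apply Hbelow; lra].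
    - specialize (Hr y ltac:(lra) ltac:(lra)); lra. }
  pose proof (Hub z Az); lra.
Qed.

(* Apply right induction to f x - eps x - L G x, where G is a gauge of N: off N the
   derivative bound makes it locally nonincreasing, on N the gauge absorbs the
   Lipschitz growth. *)
Lemma increment_le_of_ae_nonpos_derivative (f : R -> R) (N : R -> Prop) (s t L eps : R) :
  s <= t -> null_set N -> 0 <= L -> 0 < eps ->
  (forall y z, s <= y -> y <= z -> z <= t -> f z - f y <= L * (z - y)) ->
  (forall x, s <= x < t -> ~ N x -> exists d, d <= 0 /\ derivable_pt_lim f x d) ->
  f t - f s <= eps * (t - s + L).
Proof.
  intros Hst HN HL Heps Hinc Hder.
  destruct (null_set_gauge N eps HN Heps) as (G & G_mono & G_bound & G_grow).
  set (h := fun x => f x - eps * x - L * G x).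
  assert (Hh : h t <= h s).
  { apply (right_induction_le h s t L Hst).
    - intros y z Hy Hyz Hz; unfold h.
      pose proof (Hinc y z Hy Hyz Hz); pose proof (G_mono y z Hyz).
      assert (L * G y <= L * G z) by (apply Rmult_le_compat_l; lra).
      assert (eps * y <= eps * z) by (apply Rmult_le_compat_l; lra).
      lra.
    - intros x Hx; destruct (classic (N x)) as [HNx | HNx].
      + destruct (G_grow x HNx) as [r [Hxr Hr]]; exists (r - x); split; [lra|].
        intros y Hy Hyt; unfold h.
        pose proof (Hinc x y ltac:(lra) ltac:(lra) Hyt); specialize (Hr y ltac:(lra)).
        assert (L * (y - x) <= L * (G y - G x)) by (apply Rmult_le_compat_l; lra).
        assert (0 <= eps * (y - x)) by (apply Rmult_le_pos; lra).
        lra.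
      + destruct (Hder x Hx HNx) as [d [Hd Hfd]].
        destruct (derivable_pt_lim_right_upper f x d eps Hfd Heps) as [rho [Hrho Hr]].
        exists rho; split; [exact Hrho|]; intros y Hy Hyt; unfold h.
        specialize (Hr y Hy); pose proof (G_mono x y ltac:(lra)).
        assert (L * G x <= L * G y) by (apply Rmult_le_compat_l; lra).
        assert (d * (y - x) <= 0) by nra.
        lra. }
  unfold h in Hh; pose proof (G_bound t); pose proof (G_bound s).
  assert (L * (G t - G s) <= L * eps) by (apply Rmult_le_compat_l; lra).
  lra.
Qed.

Lemma lipschitz_ae_nonpos_derivative_le (f : R -> R) (N : R -> Prop) (s t : R) :
  s <= t -> null_set N -> lipschitz_on s t f ->
  (forall x, s <= x < t -> ~ N x -> exists d, d <= 0 /\ derivable_pt_lim f x d) ->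
  f t <= f s.
Proof.
  intros Hst HN [L [HL Hlip]] Hder.
  assert (Hinc : forall y z, s <= y -> y <= z -> z <= t -> f z - f y <= L * (z - y)).
  { intros y z Hy Hyz Hz; specialize (Hlip z y ltac:(lra) ltac:(lra)).
    rewrite (Rabs_right (z - y)) in Hlip by lra.
    pose proof (Rle_abs (f z - f y)); lra. }
  apply Rle_plus_epsilon; intros e He.
  set (eps := e / (t - s + L + 1)).
  assert (Heps : 0 < eps) by (apply Rdiv_lt_0_compat; lra).
  pose proof (increment_le_of_ae_nonpos_derivative f N s t L eps Hst HN HL Heps Hinc Hder).
  assert (eps * (t - s + L) <= e).
  { apply Rle_trans with (eps * (t - s + L + 1)); [apply Rmult_le_compat_l; lra|].
    right; unfold eps; field; lra. }
  lra.
Qed.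

Lemma quad_form_ge (q1 q2 q3 dm T x y : R) :
  0 < dm -> dm <= q1 * q3 - q2 * q2 -> 0 < q1 + q3 <= T ->
  dm / T * (x * x + y * y) <= q1 * (x * x) + 2 * q2 * (x * y) + q3 * (y * y).
Proof.
  intros Hdm Hdet HT.
  set (Q := q1 * (x * x) + 2 * q2 * (x * y) + q3 * (y * y)).
  assert (Hid : (q1 + q3) * Q = (q1 * x + q2 * y) * (q1 * x + q2 * y)
      + (q2 * x + q3 * y) * (q2 * x + q3 * y) + (q1 * q3 - q2 * q2) * (x * x + y * y))
    by (unfold Q; ring).
  assert (Hsq : forall z, 0 <= z * z) by (intros z; apply Rle_0_sqr).
  assert (HE : 0 <= x * x + y * y) by (pose proof (Hsq x); pose proof (Hsq y); lra).
  assert (HdmE : dm * (x * x + y * y) <= (q1 * q3 - q2 * q2) * (x * x + y * y))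
    by (apply Rmult_le_compat_r; lra).
  assert (HdmQ : dm * (x * x + y * y) <= (q1 + q3) * Q)
    by (pose proof (Hsq (q1 * x + q2 * y)); pose proof (Hsq (q2 * x + q3 * y)); lra).
  assert (HQ : 0 <= Q).
  { apply Rnot_lt_le; intro HQ.
    assert ((q1 + q3) * Q < 0) by (apply Rmult_pos_neg; lra).
    assert (0 <= dm * (x * x + y * y)) by (apply Rmult_le_pos; lra). lra. }
  assert ((q1 + q3) * Q <= T * Q) by (apply Rmult_le_compat_r; lra).
  apply (Rmult_le_reg_l T); [lra|].
  replace (T * (dm / T * (x * x + y * y))) with (dm * (x * x + y * y)) by (field; lra).
  lra.
Qed.

Lemma derivable_pt_lim_exp_scal (d x : R) :
  derivable_pt_lim (fun y => exp (d * y)) x (exp (d * x) * d).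
Proof.
  replace (exp (d * x) * d) with (exp (d * x) * (d * 1)) by ring.
  apply (derivable_pt_lim_comp (fun y => d * y) exp).
  - apply derivable_pt_lim_scal, derivable_pt_lim_id.
  - apply derivable_pt_lim_exp.
Qed.

Lemma in_open_interval_between lo hi s t x :
  in_open_interval lo hi s -> in_open_interval lo hi t -> s <= x <= t ->
  in_open_interval lo hi x.
Proof. unfold in_open_interval; destruct lo, hi; intuition lra. Qed.

Section Lyapunov.

Variables b c C m : R.

Definition dissip_det (a : R) : R := c * c * (b + a) - (a - m) * (a - m).

Lemma dissip_det_ge_min a :
  0 <= a <= C -> Rmin (dissip_det 0) (dissip_det C) <= dissip_det a.
Proof.
  intros Ha; unfold dissip_det.
  destruct (Rle_dec 0 (c * c - a + 2 * m)) as [Hpos | Hneg].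
  - apply Rle_trans with (c * c * (b + 0) - (0 - m) * (0 - m)); [apply Rmin_l|].
    assert (0 <= a * (c * c - a + 2 * m)) by (apply Rmult_le_pos; lra); nra.
  - apply Rle_trans with (c * c * (b + C) - (C - m) * (C - m)); [apply Rmin_r|].
    assert (0 <= (C - a) * (a + C - c * c - 2 * m)) by (apply Rmult_le_pos; lra); nra.
Qed.

Hypotheses (hb : 0 < b) (hc : 0 < c) (hC : 0 <= C) (hm : 0 <= m)
  (hdet0 : 0 < dissip_det 0) (hdetC : 0 < dissip_det C).

Definition lyap_alpha : R := c * c / 2 + b + m.

Definition lyap (x y : R) : R := lyap_alpha * (x * x) + c * (x * y) + y * y.

Definition lyap_deriv (x y x' y' : R) : R :=
  lyap_alpha * (2 * x * x') + c * (x' * y + x * y') + 2 * y * y'.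

Definition lyap_upper : R := lyap_alpha + c / 2 + 1.

Definition lyap_lower : R := (lyap_alpha - c * c / 4) / (lyap_alpha + 1).

(* det / trace of the dissipation form, bounded uniformly in a in [0, C]. *)
Definition dissip_rate : R := Rmin (dissip_det 0) (dissip_det C) / (c * (b + C) + c).

Definition decay_rate : R := dissip_rate / lyap_upper.

Lemma lyap_alpha_gt : c * c / 4 < lyap_alpha.
Proof. unfold lyap_alpha; nra. Qed.

Lemma lyap_upper_pos : 0 < lyap_upper.
Proof. pose proof lyap_alpha_gt; unfold lyap_upper; nra. Qed.

Lemma lyap_lower_pos : 0 < lyap_lower.
Proof.
  pose proof lyap_alpha_gt; unfold lyap_lower.
  apply Rdiv_lt_0_compat; nra.
Qed.

Lemma dissip_min_pos : 0 < Rmin (dissip_det 0) (dissip_det C).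
Proof. now apply Rmin_pos. Qed.

Lemma decay_rate_pos : 0 < decay_rate.
Proof.
  assert (0 < c * (b + C) + c) by (pose proof (Rmult_lt_0_compat c (b + C) hc ltac:(lra)); lra).
  unfold decay_rate, dissip_rate.
  apply Rdiv_lt_0_compat; [apply Rdiv_lt_0_compat|]; auto using dissip_min_pos, lyap_upper_pos.
Qed.

Lemma lyap_le_upper x y : lyap x y <= lyap_upper * (x * x + y * y).
Proof.
  pose proof lyap_alpha_gt; pose proof (Rle_0_sqr c); pose proof (Rle_0_sqr x).
  unfold Rsqr in *; unfold lyap, lyap_upper.
  assert (0 <= c * ((x - y) * (x - y))) by (apply Rmult_le_pos; [lra | apply Rle_0_sqr]).
  assert (0 <= lyap_alpha * (y * y)) by (apply Rmult_le_pos; [lra | apply Rle_0_sqr]).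
  lra.
Qed.

Lemma lyap_ge_lower x y : lyap_lower * (x * x + y * y) <= lyap x y.
Proof.
  pose proof lyap_alpha_gt.
  replace (lyap x y) with (lyap_alpha * (x * x) + 2 * (c / 2) * (x * y) + 1 * (y * y))
    by (unfold lyap; field).
  pose proof (Rle_0_sqr c); unfold Rsqr in *; apply quad_form_ge; lra.
Qed.

Lemma lyap_deriv_solution x y a :
  0 <= a <= C -> lyap_deriv x y y (- (c * y) - (b + a) * x) <= - dissip_rate * (x * x + y * y).
Proof.
  intros Ha.
  replace (lyap_deriv x y y (- (c * y) - (b + a) * x))
    with (- (c * (b + a) * (x * x) + 2 * (a - m) * (x * y) + c * (y * y)))
    by (unfold lyap_deriv, lyap_alpha; field).
  enough (dissip_rate * (x * x + y * y)
            <= c * (b + a) * (x * x) + 2 * (a - m) * (x * y) + c * (y * y)) by lra.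
  apply quad_form_ge; [apply dissip_min_pos| |nra].
  replace (c * (b + a) * c - (a - m) * (a - m)) with (dissip_det a) by (unfold dissip_det; ring).
  now apply dissip_det_ge_min.
Qed.

Lemma lyap_decay_along_solution x y a :
  0 <= a <= C -> lyap_deriv x y y (- (c * y) - (b + a) * x) + decay_rate * lyap x y <= 0.
Proof.
  intros Ha; pose proof (lyap_deriv_solution x y a Ha).
  assert (decay_rate * lyap x y <= dissip_rate * (x * x + y * y)).
  { pose proof lyap_upper_pos; pose proof decay_rate_pos.
    apply Rle_trans with (decay_rate * (lyap_upper * (x * x + y * y))).
    - apply Rmult_le_compat_l; [lra | apply lyap_le_upper].
    - right; unfold decay_rate; field; lra. }
  lra.
Qed.

Lemma derivable_pt_lim_lyap (u v : R -> R) x u' v' :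
  derivable_pt_lim u x u' -> derivable_pt_lim v x v' ->
  derivable_pt_lim (fun y => lyap (u y) (v y)) x (lyap_deriv (u x) (v x) u' v').
Proof.
  intros Hu Hv.
  pose proof (derivable_pt_lim_plus _ _ x _ _
    (derivable_pt_lim_plus _ _ x _ _
      (derivable_pt_lim_scal _ lyap_alpha x _ (derivable_pt_lim_mult u u x u' u' Hu Hu))
      (derivable_pt_lim_scal _ c x _ (derivable_pt_lim_mult u v x u' v' Hu Hv)))
    (derivable_pt_lim_mult v v x v' v' Hv Hv)) as H.
  replace (lyap_deriv (u x) (v x) u' v')
    with (lyap_alpha * (u' * u x + u x * u') + c * (u' * v x + u x * v') + (v' * v x + v x * v'))
    by (unfold lyap_deriv; ring).
  exact H.
Qed.

Lemma solution_lyap_decay (J : R -> Prop) (a u u1 : R -> R) (s t : R) :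
  s <= t -> (forall x, s <= x <= t -> J x) -> ae_on J (fun x => 0 <= a x <= C) ->
  is_W2inf_loc_solution J b c a u u1 ->
  lyap (u t) (u1 t) * exp (decay_rate * t) <= lyap (u s) (u1 s) * exp (decay_rate * s).
Proof.
  intros Hst HJ [Na [HNa Ha]] [Hu [Hu1_lip [Nu [HNu Hu1]]]].
  apply (lipschitz_ae_nonpos_derivative_le (fun x => lyap (u x) (u1 x) * exp (decay_rate * x))
           (fun x => Na x \/ Nu x) s t Hst
           (null_set_union _ _ HNa HNu)).
  - assert (Lu1 : lipschitz_on s t u1)
      by (apply (loc_lipschitz_on_lipschitz_on J); auto with real).
    assert (Lu : lipschitz_on s t u).
    { apply (lipschitz_on_derivable s t u u1 Hst); [intros; apply Hu, HJ; lra|].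
      now apply lipschitz_on_bounded. }
    assert (Lexp : lipschitz_on s t (fun x => exp (decay_rate * x))).
    { pose proof decay_rate_pos.
      apply (lipschitz_on_derivable s t _ _ Hst
               (fun x _ => derivable_pt_lim_exp_scal decay_rate x)).
      exists (exp (decay_rate * t) * decay_rate); intros x Hx.
      rewrite Rabs_right by (apply Rle_ge, Rmult_le_pos; [apply Rlt_le, exp_pos | lra]).
      apply Rmult_le_compat_r; [lra|].
      destruct (Req_dec x t) as [-> | Hxt]; [lra|].
      apply Rlt_le, exp_increasing, Rmult_lt_compat_l; lra. }
    unfold lyap; repeat first
      [ assumption | apply lipschitz_on_const | apply lipschitz_on_plus | apply lipschitz_on_mult ].
  - intros x Hx HN; apply not_or_and in HN as [HNax HNux].
    assert (Jx : J x) by (apply HJ; lra).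
    eexists; split; [|apply derivable_pt_lim_mult;
                       [apply derivable_pt_lim_lyap; [apply Hu, Jx | apply Hu1; assumption]
                       | apply derivable_pt_lim_exp_scal]].
    pose proof (lyap_decay_along_solution (u x) (u1 x) (a x) (Ha x Jx HNax)).
    pose proof (exp_pos (decay_rate * x)).
    nra.
Qed.

Lemma solution_energy_decay (J : R -> Prop) (a u u1 : R -> R) (s t : R) :
  s <= t -> (forall x, s <= x <= t -> J x) -> ae_on J (fun x => 0 <= a x <= C) ->
  is_W2inf_loc_solution J b c a u u1 ->
  (u t)^2 + (u1 t)^2
    <= lyap_upper / lyap_lower * ((u s)^2 + (u1 s)^2) * exp (- decay_rate * (t - s)).
Proof.
  intros Hst HJ Ha Hsol.
  pose proof (solution_lyap_decay J a u u1 s t Hst HJ Ha Hsol) as Hdec.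
  pose proof (lyap_ge_lower (u t) (u1 t)) as Hlow.
  pose proof (lyap_le_upper (u s) (u1 s)) as Hup.
  pose proof lyap_lower_pos; pose proof lyap_upper_pos.
  set (Ex := exp (- decay_rate * (t - s))).
  assert (HEx : exp (decay_rate * t) * Ex = exp (decay_rate * s))
    by (unfold Ex; rewrite <- exp_plus; f_equal; ring).
  assert (0 < Ex) by apply exp_pos.
  assert (Ht : lyap (u t) (u1 t) <= lyap (u s) (u1 s) * Ex).
  { apply (Rmult_le_reg_r (exp (decay_rate * t))); [apply exp_pos|].
    rewrite Rmult_assoc, (Rmult_comm Ex), HEx; exact Hdec. }
  assert (lyap (u s) (u1 s) * Ex <= lyap_upper * (u s * u s + u1 s * u1 s) * Ex)
    by (apply Rmult_le_compat_r; lra).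
  apply (Rmult_le_reg_l lyap_lower); [lra|].
  replace (lyap_lower * (lyap_upper / lyap_lower * ((u s)^2 + (u1 s)^2) * Ex))
    with (lyap_upper * (u s * u s + u1 s * u1 s) * Ex) by (field; lra).
  replace ((u t)^2 + (u1 t)^2) with (u t * u t + u1 t * u1 t) by ring.
  lra.
Qed.

End Lyapunov.

Lemma dissip_shift_exists (b c C : R) :
  0 < b -> 0 < c -> 0 <= C -> C < c * Rmax c (2 * sqrt b) ->
  exists m, 0 <= m /\ 0 < dissip_det b c m 0 /\ 0 < dissip_det b c m C.
Proof.
  intros hb hc hC hCb; unfold dissip_det.
  assert (Hcc : 0 < c * c) by nra.
  destruct (Rlt_dec C (c * c)) as [Hlt | Hge].
  - exists 0; split; [lra|split]; [nra|].
    assert (C * C <= C * (c * c)) by (apply Rmult_le_compat_l; lra); nra.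
  - assert (Hs : C < 2 * c * sqrt b)
      by (unfold Rmax in hCb; destruct Rle_dec; nra).
    assert (Hsq : sqrt b * sqrt b = b) by (apply sqrt_sqrt; lra).
    pose proof (sqrt_pos b).
    assert (HC2 : C * C < 4 * (c * c * b)).
    { assert (Hlt : C * C < (2 * c * sqrt b) * (2 * c * sqrt b))
        by (apply Rmult_le_0_lt_compat; lra).
      replace ((2 * c * sqrt b) * (2 * c * sqrt b)) with (4 * (c * c) * (sqrt b * sqrt b)) in Hlt
        by ring.
      rewrite Hsq in Hlt; lra. }
    exists (C / 2); split; [lra|split]; nra.
Qed.

Theorem theorem2p1 (b c C : R) (lo hi : option R) (a : R -> R)
  (hb : 0 < b) (hc : 0 < c) (hC0 : 0 <= C)
  (hCbound : C < c * Rmax c (2 * sqrt b))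
  (ha : ae_on (in_open_interval lo hi) (fun t => 0 <= a t <= C)) :
  exists delta M : R, 0 < delta /\ 0 < M /\
    forall u u1 : R -> R,
      is_W2inf_loc_solution (in_open_interval lo hi) b c a u u1 ->
      forall s t, in_open_interval lo hi s -> in_open_interval lo hi t -> s <= t ->
        (u t)^2 + (u1 t)^2 <= M * ((u s)^2 + (u1 s)^2) * exp (- delta * (t - s)).
Proof.
  destruct (dissip_shift_exists b c C hb hc hC0 hCbound) as (m & hm & hdet0 & hdetC).
  exists (decay_rate b c C m), (lyap_upper b c m / lyap_lower b c m); split; [|split].
  - now apply decay_rate_pos.
  - apply Rdiv_lt_0_compat; [apply lyap_upper_pos | apply lyap_lower_pos]; assumption.
  - intros u u1 Hsol s t Js Jt Hst.
    apply (solution_energy_decay b c C m hb hc hC0 hm hdet0 hdetC (in_open_interval lo hi) a);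
      [assumption | | assumption | assumption].
    intros x Hx; exact (in_open_interval_between lo hi s t x Js Jt Hx).
Qed.
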